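(* Let $\{x_n\}$ be a statistically convergent sequence in an $S$-metric space $(X,S)$. Then there is a convergent sequence $\{y_n\}$ in $X$ such that $x_n=y_n$ for almost all $n\in\mathbb N$, i.e. $\delta(\{n\in\mathbb N: x_n\ne y_n\})=0$.
   Context: An $S$-metric on a nonempty set $X$ is a function $S:X^3\to[0,\infty)$ such that for all $x,y,z,a\in X$: $S(x,y,z)=0$ if and only if $x=y=z$, and $S(x,y,z)\le S(x,x,a)+S(y,y,a)+S(z,z,a)$. A sequence $\{y_n\}$ converges to $y$ if for every $\varepsilon>0$ there is $k$ with $S(y_n,y_n,y)<\varepsilon$ for all $n\ge k$. For $B\subset\mathbb N$ the natural density is $\delta(B)=\lim_{n\to\infty}\frac{|\{k\in B:k\le n\}|}{n}$ when the limit exists. A sequence $\{x_n\}$ is statistically convergent to $x\in X$ if for every $\varepsilon>0$, $\delta(\{n\in\mathbb N: S(x_n,x_n,x)\ge\varepsilon\})=0$. *)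

From Stdlib Require Import Reals Lra ClassicalEpsilon.
Open Scope R_scope.

Record is_S_metric (X : Type) (S : X -> X -> X -> R) : Prop := {
  Sm_nonneg : forall x y z, 0 <= S x y z;
  Sm_zero : forall x y z, S x y z = 0 <-> (x = y /\ y = z);
  Sm_ineq : forall x y z a, S x y z <= S x x a + S y y a + S z z a
}.

Definition S_converges {X : Type} (S : X -> X -> X -> R) (y : nat -> X) (l : X) : Prop :=
  forall eps, 0 < eps -> exists k : nat, forall n, (n >= k)%nat -> S (y n) (y n) l < eps.

Definition ind (B : nat -> Prop) (k : nat) : R :=
  if excluded_middle_informative (B k) then 1 else 0.

Fixpoint count_upto (B : nat -> Prop) (n : nat) : R :=
  match n with
  | O => 0
  | S m => count_upto B m + ind B (S m)
  end.

Definition has_density (B : nat -> Prop) (d : R) : Prop :=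
  Un_cv (fun n => count_upto B (S n) / INR (S n)) d.

Definition stat_converges {X : Type} (S : X -> X -> X -> R) (x : nat -> X) (l : X) : Prop :=
  forall eps, 0 < eps -> has_density (fun n => (n >= 1)%nat /\ S (x n) (x n) l >= eps) 0.

(** The sets [A_j = {n : S(x_n, x_n, l) >= 1/(j+1)}] increase
    with [j] and all have density zero.  Density-zero sets form a P-ideal: one can glue
    the tails [A_j ∩ [w_j, oo)] along a fast enough increasing sequence [w] into a single
    density-zero set [B] that contains every [A_j] up to finitely many points.  Setting
    [y_n = l] on [B] and [y_n = x_n] off [B] gives a sequence converging to [l] that
    differs from [x] only on [B]. *)

From Pilot Require Import Defs.
From Stdlib Require Import Reals Lra Lia ClassicalEpsilon.
Open Scope R_scope.

Lemma Rinv_INR_S_le (j k : nat) : (j <= k)%nat -> / INR (S k) <= / INR (S j).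
Proof.
  intro hjk. apply Rinv_le_contravar.
  - apply lt_0_INR; lia.
  - apply le_INR; lia.
Qed.

Lemma archimed_Rinv_INR_S (eps : R) :
  0 < eps -> exists K : nat, (1 <= K)%nat /\ / INR (S K) < eps.
Proof.
  intro heps. destruct (archimed_cor1 eps heps) as [K [hK hK0]].
  exists K. split; [lia|].
  assert (/ INR (S K) < / INR K).
  { apply Rinv_lt_contravar.
    - apply Rmult_lt_0_compat; apply lt_0_INR; lia.
    - apply lt_INR; lia. }
  lra.
Qed.

Section StrictlyIncreasing.

Variable f : nat -> nat.
Hypothesis f_incr : forall j, (f j < f (S j))%nat.

Lemma incr_le (j k : nat) : (j <= k)%nat -> (f j <= f k)%nat.
Proof. induction 1; [lia | specialize (f_incr m); lia]. Qed.

Lemma incr_index_le (j k : nat) : (f k < f (S j))%nat -> (k <= j)%nat.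
Proof.
  intro h. destruct (Nat.le_gt_cases k j) as [hkj|hjk]; [exact hkj|].
  pose proof (incr_le (S j) k hjk). lia.
Qed.

Lemma incr_segment (m : nat) : f 0 = 0%nat -> exists j, (f j <= m < f (S j))%nat.
Proof.
  intro f0. induction m as [|m [j hj]].
  - exists 0%nat. specialize (f_incr 0%nat). lia.
  - destruct (Nat.le_gt_cases (f (S j)) (S m)).
    + exists (S j). specialize (f_incr (S j)). lia.
    + exists j. lia.
Qed.

End StrictlyIncreasing.

Fixpoint strict_majorant (v : nat -> nat) (j : nat) : nat :=
  match j with
  | O => O
  | S i => Nat.max (S (strict_majorant v i)) (S (v j))
  end.

Lemma strict_majorant_incr (v : nat -> nat) (j : nat) :
  (strict_majorant v j < strict_majorant v (S j))%nat.
Proof. cbn [strict_majorant]. lia. Qed.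

Lemma strict_majorant_gt (v : nat -> nat) (j : nat) :
  (v (S j) < strict_majorant v (S j))%nat.
Proof. cbn [strict_majorant]. lia. Qed.

Definition density_ratio (B : nat -> Prop) (n : nat) : R :=
  count_upto B (S n) / INR (S n).

Lemma count_upto_nonneg (B : nat -> Prop) (n : nat) : 0 <= count_upto B n.
Proof.
  induction n as [|n IH]; simpl; [lra|].
  unfold Defs.ind. destruct (excluded_middle_informative (B (S n))); lra.
Qed.

Lemma count_upto_mono (B C : nat -> Prop) (n : nat) :
  (forall k, (1 <= k <= n)%nat -> B k -> C k) -> count_upto B n <= count_upto C n.
Proof.
  induction n as [|n IH]; simpl; intro hBC; [lra|].
  assert (count_upto B n <= count_upto C n)
    by (apply IH; intros k hk; apply hBC; lia).
  unfold Defs.ind.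
  destruct (excluded_middle_informative (B (S n))) as [hB|];
    destruct (excluded_middle_informative (C (S n))) as [|hC]; try lra.
  exfalso. apply hC, hBC; [lia | exact hB].
Qed.

Lemma density_ratio_nonneg (B : nat -> Prop) (n : nat) : 0 <= density_ratio B n.
Proof.
  unfold density_ratio, Rdiv. apply Rmult_le_pos; [apply count_upto_nonneg|].
  left. apply Rinv_0_lt_compat, lt_0_INR. lia.
Qed.

Lemma density_ratio_mono (B C : nat -> Prop) (n : nat) :
  (forall k, (1 <= k <= S n)%nat -> B k -> C k) ->
  density_ratio B n <= density_ratio C n.
Proof.
  intro hBC. unfold density_ratio, Rdiv. apply Rmult_le_compat_r.
  - left. apply Rinv_0_lt_compat, lt_0_INR. lia.
  - now apply count_upto_mono.
Qed.

Lemma density0_eventually_lt (B : nat -> Prop) (eps : R) :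
  has_density B 0 -> 0 < eps ->
  exists N, forall n, (n >= N)%nat -> density_ratio B n < eps.
Proof.
  intros hB heps. destruct (hB eps heps) as [N hN]. exists N. intros n hn.
  specialize (hN n hn). unfold R_dist in hN. rewrite Rminus_0_r in hN.
  apply Rabs_def2 in hN. unfold density_ratio. lra.
Qed.

Lemma density0_intro (B : nat -> Prop) :
  (forall eps, 0 < eps -> exists N, forall n, (n >= N)%nat -> density_ratio B n < eps) ->
  has_density B 0.
Proof.
  intros hB eps heps. destruct (hB eps heps) as [N hN]. exists N. intros n hn.
  unfold R_dist. rewrite Rminus_0_r, Rabs_pos_eq by apply density_ratio_nonneg.
  now apply hN.
Qed.

Lemma density0_subset (B C : nat -> Prop) :
  (forall n, C n -> B n) -> has_density B 0 -> has_density C 0.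
Proof.
  intros hCB hB. apply density0_intro. intros eps heps.
  destruct (density0_eventually_lt B eps hB heps) as [N hN]. exists N. intros n hn.
  pose proof (density_ratio_mono C B n (fun k _ => hCB k)). specialize (hN n hn). lra.
Qed.

Lemma density0_almost_union (A : nat -> nat -> Prop) :
  (forall j j' n, (j <= j')%nat -> A j n -> A j' n) ->
  (forall j, has_density (A j) 0) ->
  exists B : nat -> Prop, has_density B 0 /\
    forall j, exists N, forall n, (n >= N)%nat -> A j n -> B n.
Proof.
  intros A_mono A_dens.
  destruct (choice (fun j N => forall n, (n >= N)%nat ->
                      density_ratio (A j) n < / INR (S j))) as [v hv].
  { intro j. apply density0_eventually_lt; [apply A_dens|].
    apply Rinv_0_lt_compat, lt_0_INR. lia. }
  set (w := strict_majorant v).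
  pose proof (strict_majorant_incr v) as w_incr.
  exists (fun m => exists j, (w j <= m)%nat /\ A j m). split.
  2:{ intro j. exists (w j). intros n hn hA. now exists j. }
  apply density0_intro. intros eps heps.
  destruct (archimed_Rinv_INR_S eps heps) as [K [hK1 hK]].
  exists (w K). intros n hn.
  destruct (incr_segment w w_incr (S n) eq_refl) as [j [hj_lo hj_hi]].
  assert (hKj : (K <= j)%nat) by (apply (incr_index_le w w_incr); lia).
  destruct j as [|j]; [lia|].
  assert (hB : density_ratio (fun m => exists i, (w i <= m)%nat /\ A i m) n
               <= density_ratio (A (S j)) n).
  { apply density_ratio_mono. intros k hk [i [hi hA]].
    apply (A_mono i); [apply (incr_index_le w w_incr); lia | exact hA]. }
  assert (hvj : (n >= v (S j))%nat) by (pose proof (strict_majorant_gt v j : (v (S j) < w (S j))%nat); lia).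
  pose proof (hv _ _ hvj). pose proof (Rinv_INR_S_le K (S j) hKj). lra.
Qed.

Lemma S_metric_diag (X : Type) (S : X -> X -> X -> R) (l : X) :
  is_S_metric X S -> S l l l = 0.
Proof. intro HS. now apply (Sm_zero X S HS). Qed.

Theorem theorem3p4 (X : Type) (x0 : X) (S : X -> X -> X -> R)
  (HS : is_S_metric X S) (x : nat -> X) (l : X)
  (Hx : stat_converges S x l) :
  exists (y : nat -> X) (m : X),
    S_converges S y m /\
    has_density (fun n => (n >= 1)%nat /\ x n <> y n) 0.
Proof.
  set (A := fun j n => (n >= 1)%nat /\ S (x n) (x n) l >= / INR (Datatypes.S j)).
  destruct (density0_almost_union A) as [B [B_dens A_in_B]].
  - intros j j' n hjj' [hn hS]. split; [exact hn|].
    pose proof (Rinv_INR_S_le j j' hjj'). lra.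
  - intro j. apply Hx, Rinv_0_lt_compat, lt_0_INR. lia.
  - exists (fun n => if excluded_middle_informative (B n) then l else x n), l. split.
    + intros eps heps. destruct (archimed_Rinv_INR_S eps heps) as [K [_ hK]].
      destruct (A_in_B K) as [N hN]. exists (Nat.max N 1). intros n hn.
      destruct (excluded_middle_informative (B n)) as [|hnB].
      * rewrite S_metric_diag by exact HS. lra.
      * destruct (Rlt_or_le (S (x n) (x n) l) (/ INR (Datatypes.S K))); [lra|].
        exfalso. apply hnB, hN; [lia | split; [lia | lra]].
    + apply (density0_subset B); [|exact B_dens].
      intros n [_ hxy]. destruct (excluded_middle_informative (B n)); congruence.
Qed.
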